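(* Let $G$ be a group and $N$ a fully invariant subgroup of $G$ (i.e. $\phi(N)\subseteq N$ for all $\phi\in\mathrm{End}(G)$; in particular $N$ is normal). For each $\phi\in\mathrm{End}(G)$ and each $\phi$-cellular automaton $\mathcal{T}:A^G\to A^G$, let $\widehat{\mathcal{T}}:A^{G/N}\to A^{G/N}$ be the unique $\hat\phi$-cellular automaton with $\rho^*\circ\widehat{\mathcal{T}}=\mathcal{T}\circ\rho^*$, where $\hat\phi(gN):=\phi(g)N$. Then the map $\mathcal{T}\mapsto\widehat{\mathcal{T}}$ from $\mathrm{GCA}(A^G)$ to $\mathrm{GCA}(A^{G/N})$ is a monoid homomorphism.
   Context: $A$ is a finite set with $|A|\ge 2$. $A^G$ is the set of functions $G\to A$ with shift action $(g\cdot x)(k):=x(g^{-1}k)$. For $\phi\in\mathrm{End}(G)$, a $\phi$-cellular automaton is a map $\mathcal{T}:A^G\to A^G$ for which there exist finite $T\subseteq G$ and $\mu:A^T\to A$ with $\mathcal{T}(x)(h)=\mu((\phi(h^{-1})\cdot x)|_T)$ for all $x,h$. $\mathrm{GCA}(A^G)$ is the monoid (under composition) of all $\phi$-cellular automata $A^G\to A^G$ over all $\phi\in\mathrm{End}(G)$. $\rho:G\to G/N$ is the canonical projection and $\rho^*:A^{G/N}\to A^G$, $\rho^*(x):=x\circ\rho$. *)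

From mathcomp Require Import all_boot.
From Stdlib Require Import List.

Set Implicit Arguments.
Unset Strict Implicit.
Unset Printing Implicit Defensive.

Record group := Group {
  gcar :> Type;
  gmul : gcar -> gcar -> gcar;
  gone : gcar;
  ginv : gcar -> gcar;
  gmulA : forall a b c, gmul a (gmul b c) = gmul (gmul a b) c;
  gmul1 : forall a, gmul gone a = a;
  gmulV : forall a, gmul (ginv a) a = gone
}.

Arguments gmul {g}.
Arguments gone {g}.
Arguments ginv {g}.

Definition is_hom (G H : group) (f : G -> H) : Prop :=
  forall a b : G, f (gmul a b) = gmul (f a) (f b).

Definition is_endo (G : group) (phi : G -> G) : Prop := is_hom phi.

Definition is_subgroup (G : group) (N : G -> Prop) : Prop :=
  N gone /\ (forall a b, N a -> N b -> N (gmul a b)) /\ (forall a, N a -> N (ginv a)).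

Definition fully_invariant (G : group) (N : G -> Prop) : Prop :=
  forall phi : G -> G, is_endo phi -> forall g, N g -> N (phi g).

(* rho : G -> Q is (a model of) the canonical projection G -> G/N:
   a surjective homomorphism with kernel exactly N. *)
Definition is_quotient_map (G Q : group) (N : G -> Prop) (rho : G -> Q) : Prop :=
  is_hom rho /\ (forall q : Q, exists g : G, rho g = q) /\
  (forall g : G, rho g = gone <-> N g).

Definition shift (G : group) (A : Type) (g : G) (x : G -> A) : G -> A :=
  fun k => x (gmul (ginv g) k).

Definition is_phiCA (G : group) (A : Type) (phi : G -> G)
  (T : (G -> A) -> (G -> A)) : Prop :=
  exists (S : list G) (mu : ({k : G | In k S} -> A) -> A),
    forall (x : G -> A) (h : G),
      T x h = mu (fun k => shift (phi (ginv h)) x (proj1_sig k)).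

Definition is_GCA (G : group) (A : Type) (T : (G -> A) -> (G -> A)) : Prop :=
  exists phi : G -> G, is_endo phi /\ is_phiCA phi T.

Definition pullback (G Q : group) (A : Type) (rho : G -> Q) (x : Q -> A) : G -> A :=
  fun g => x (rho g).

Definition is_hat (G Q : group) (A : Type) (rho : G -> Q)
  (T : (G -> A) -> (G -> A)) (S : (Q -> A) -> (Q -> A)) : Prop :=
  is_GCA S /\ forall x : Q -> A, pullback rho (S x) = T (pullback rho x).

From mathcomp Require Import all_boot.
From Stdlib Require Import List.
From Stdlib Require Import FunctionalExtensionality ClassicalEpsilon.

(* The proof splits into three independent pieces.
   1. Generalized cellular automata over any group are closed under
      composition and contain the identity; for this the local rule
      T x h = mu ((phi h^-1 . x)|_S) is rewritten as T x h = mu (k |-> x (phi h k)),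
      so that a composite has memory set { phi2 s1 * s2 }.
   2. For a quotient map rho : G -> Q with fully invariant kernel N, every
      endomorphism phi descends to psi with psi o rho = rho o phi, and a
      phi-CA with local rule mu descends to the psi-CA with the same rule on
      the memory set rho(S).  Since rho is surjective, rho^* is injective,
      so the descended automaton is unique.
   3. The defining relation rho^* o S = T o rho^* is stable under composition
      and holds for the identities; together with 1 this gives the monoid
      homomorphism property. *)

Section GroupFacts.
Variable G : group.

Lemma gmulVr (a : G) : gmul a (ginv a) = gone.
Proof.
transitivity (gmul (gmul (ginv (ginv a)) (ginv a)) (gmul a (ginv a))).
  by rewrite gmulV gmul1.
by rewrite -gmulA (gmulA (ginv a) a) gmulV gmul1 gmulV.
Qed.

Lemma gmulr1 (a : G) : gmul a gone = a.
Proof. by rewrite -(gmulV a) gmulA gmulVr gmul1. Qed.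

Lemma ginv_unique (a b : G) : gmul a b = gone -> b = ginv a.
Proof. by move=> ab1; rewrite -(gmul1 b) -(gmulV a) -gmulA ab1 gmulr1. Qed.

Lemma ginvK (a : G) : ginv (ginv a) = a.
Proof. by symmetry; apply: ginv_unique; rewrite gmulV. Qed.

End GroupFacts.

Section HomFacts.
Variables (G H : group) (f : G -> H).
Hypothesis f_hom : is_hom f.

Lemma hom1 : f gone = gone.
Proof.
have f1sq : f gone = gmul (f gone) (f gone) by rewrite -f_hom gmul1.
transitivity (gmul (ginv (f gone)) (gmul (f gone) (f gone))).
  by rewrite gmulA gmulV gmul1.
by rewrite -f1sq gmulV.
Qed.

Lemma homV (a : G) : f (ginv a) = ginv (f a).
Proof. by apply: ginv_unique; rewrite -f_hom gmulVr hom1. Qed.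

End HomFacts.

Arguments hom1 {G H f}.
Arguments homV {G H f}.

Lemma phiCA_localP (G : group) (A : Type) (phi : G -> G) (T : (G -> A) -> G -> A) :
  is_endo phi ->
  is_phiCA phi T <->
  exists (S : list G) (mu : ({k : G | In k S} -> A) -> A),
    forall x h, T x h = mu (fun k => x (gmul (phi h) (proj1_sig k))).
Proof.
move=> phi_endo.
have shiftE (x : G -> A) h k : shift (phi (ginv h)) x k = x (gmul (phi h) k).
  by rewrite /shift (homV phi_endo) ginvK.
split=> -[S [mu TE]]; exists S, mu => x h; rewrite TE;
  by congr mu; apply: functional_extensionality => k; rewrite shiftE.
Qed.

Arguments phiCA_localP {G A phi T}.

(* GCA(A^G) is closed under composition: the composite of a phi1-CA and a
   phi2-CA is a (phi2 o phi1)-CA with memory set { phi2 s1 * s2 }. *)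
Lemma GCA_comp (G : group) (A : Type) (T1 T2 : (G -> A) -> G -> A) :
  is_GCA T1 -> is_GCA T2 -> is_GCA (fun x => T1 (T2 x)).
Proof.
move=> [phi1 [e1 /(phiCA_localP e1) [S1 [mu1 T1E]]]].
move=> [phi2 [e2 /(phiCA_localP e2) [S2 [mu2 T2E]]]].
have e12 : is_endo (fun g => phi2 (phi1 g)) by move=> a b /=; rewrite e1 e2.
exists (fun g => phi2 (phi1 g)); split => //; apply/(phiCA_localP e12).
pose S := flat_map (fun a => map (gmul (phi2 a)) S2) S1.
have memS (k1 : {k | In k S1}) (k2 : {k | In k S2}) :
    In (gmul (phi2 (proj1_sig k1)) (proj1_sig k2)) S.
  case: k1 k2 => [k1 i1] [k2 i2] /=; apply/in_flat_map.
  by exists k1; split => //; apply: in_map.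
exists S, (fun f : {k | In k S} -> A =>
  mu1 (fun k1 => mu2 (fun k2 => f (exist (fun k => In k S) _ (memS k1 k2))))).
move=> x h; rewrite T1E; congr mu1; apply: functional_extensionality => k1.
rewrite T2E; congr mu2; apply: functional_extensionality => k2 /=.
by rewrite e2 gmulA.
Qed.

Lemma GCA_id (G : group) (A : Type) : is_GCA (fun x : G -> A => x).
Proof.
have e : is_endo (@id G) by [].
exists id; split => //; apply/(phiCA_localP e).
have i1 : In (@gone G) [:: gone] by left.
exists [:: gone], (fun f : {k | In k [:: gone]} -> A => f (exist (fun k => In k _) _ i1)).
by move=> x h /=; rewrite gmulr1.
Qed.

Section Quotient.
Variables (G Q : group) (A : Type) (N : G -> Prop) (rho : G -> Q).
Hypothesis rho_quo : is_quotient_map N rho.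

Let rho_hom : is_hom rho. Proof. by case: rho_quo. Qed.
Let rho_surj : forall q, exists g, rho g = q. Proof. by case: rho_quo => _ []. Qed.
Let rho_ker : forall g, rho g = gone <-> N g. Proof. by case: rho_quo => _ []. Qed.

Lemma rho_eq_ker (a b : G) : rho a = rho b -> N (gmul (ginv a) b).
Proof. by move=> ab; apply/rho_ker; rewrite rho_hom (homV rho_hom) ab gmulV. Qed.

Lemma endo_respects_fibres (phi : G -> G) :
  is_endo phi -> (forall g, N g -> N (phi g)) ->
  forall a b, rho a = rho b -> rho (phi a) = rho (phi b).
Proof.
move=> phi_endo phiN a b /rho_eq_ker /phiN /rho_ker.
rewrite phi_endo (homV phi_endo) rho_hom (homV rho_hom) => /ginv_unique ->.
by rewrite ginvK.
Qed.

Lemma induced_endo (phi : G -> G) :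
  is_endo phi -> (forall g, N g -> N (phi g)) ->
  exists psi : Q -> Q, is_endo psi /\ forall g, psi (rho g) = rho (phi g).
Proof.
move=> phi_endo phiN.
pose sec q := proj1_sig (constructive_indefinite_description _ (rho_surj q)).
have secK q : rho (sec q) = q by rewrite /sec; case: constructive_indefinite_description.
have psiE g : rho (phi (sec (rho g))) = rho (phi g).
  by apply: endo_respects_fibres => //; rewrite secK.
exists (fun q => rho (phi (sec q))); split => // a b.
have [ga <-] := rho_surj a; have [gb <-] := rho_surj b.
by rewrite -rho_hom !psiE phi_endo rho_hom.
Qed.

Lemma pullback_inj (x y : Q -> A) : pullback rho x = pullback rho y -> x = y.
Proof.
move=> xy; apply: functional_extensionality => q; have [g <-] := rho_surj q.
exact: (f_equal (fun f => f g) xy).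
Qed.

Lemma descent_unique (T : (G -> A) -> G -> A) (S S' : (Q -> A) -> Q -> A) :
  (forall x, pullback rho (S x) = T (pullback rho x)) ->
  (forall x, pullback rho (S' x) = T (pullback rho x)) -> S = S'.
Proof.
move=> SE S'E; apply: functional_extensionality => x.
by apply: pullback_inj; rewrite SE S'E.
Qed.

(* A phi-CA with local rule mu on S descends to the psi-CA with the same rule
   on rho(S), for any psi with psi o rho = rho o phi. *)
Lemma descent_exists (phi : G -> G) (psi : Q -> Q) (T : (G -> A) -> G -> A) :
  is_endo phi -> is_endo psi -> (forall g, psi (rho g) = rho (phi g)) ->
  is_phiCA phi T ->
  exists S : (Q -> A) -> Q -> A,
    is_phiCA psi S /\ forall x, pullback rho (S x) = T (pullback rho x).
Proof.
move=> phi_endo psi_endo psiE /(phiCA_localP phi_endo) [L [mu TE]].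
pose S y q := mu (fun k => y (gmul (psi q) (rho (proj1_sig k)))).
exists S; split.
- apply/(phiCA_localP psi_endo).
  have memL (k : {k | In k L}) : In (rho (proj1_sig k)) (map rho L).
    by case: k => k i; apply: in_map.
  by exists (map rho L), (fun f : {q | In q (map rho L)} -> A =>
    mu (fun k => f (exist (fun q => In q (map rho L)) _ (memL k)))).
- move=> y; apply: functional_extensionality => g.
  rewrite /pullback /S TE psiE; congr mu; apply: functional_extensionality => k.
  by rewrite rho_hom.
Qed.

Lemma is_hat_comp (T1 T2 : (G -> A) -> G -> A) (S1 S2 : (Q -> A) -> Q -> A) :
  is_hat rho T1 S1 -> is_hat rho T2 S2 ->
  is_hat rho (fun x => T1 (T2 x)) (fun x => S1 (S2 x)).
Proof.
move=> [S1GCA S1E] [S2GCA S2E]; split; first exact: GCA_comp.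
by move=> x; rewrite S1E S2E.
Qed.

Lemma is_hat_id : is_hat rho (fun x : G -> A => x) (fun x : Q -> A => x).
Proof. by split; first exact: GCA_id. Qed.

End Quotient.

Arguments induced_endo {G Q N rho} rho_quo {phi}.
Arguments descent_unique {G Q A N rho} rho_quo {T S S'}.
Arguments descent_exists {G Q A N rho} rho_quo {phi psi T}.


Theorem corollary4p4 (G : group) (A : finType) (hA : 1 < #|A|)
  (N : G -> Prop) (hN : is_subgroup N) (hfi : fully_invariant N)
  (Q : group) (rho : G -> Q) (hrho : is_quotient_map N rho) :
  (* well-definedness: for every phi-CA T, hat phi exists, and for it there is
     a unique hat-phi-CA S with rho^* o S = T o rho^* *)
  (forall (phi : G -> G) (T : (G -> A) -> (G -> A)),
      is_endo phi -> is_phiCA phi T ->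
      (exists psi : Q -> Q, is_endo psi /\ forall g, psi (rho g) = rho (phi g)) /\
      (forall psi : Q -> Q, is_endo psi -> (forall g, psi (rho g) = rho (phi g)) ->
        exists! S : (Q -> A) -> (Q -> A),
          is_phiCA psi S /\ forall x, pullback rho (S x) = T (pullback rho x))) /\
  (* compatibility with composition *)
  (forall (T1 T2 : (G -> A) -> (G -> A)) (S1 S2 : (Q -> A) -> (Q -> A)),
      is_GCA T1 -> is_GCA T2 -> is_hat rho T1 S1 -> is_hat rho T2 S2 ->
      is_hat rho (fun x => T1 (T2 x)) (fun x => S1 (S2 x))) /\
  (* compatibility with the identity *)
  is_hat rho (fun x : G -> A => x) (fun x : Q -> A => x).
Proof.
split; last split.
- move=> phi T phi_endo phiCA; split; first exact: (induced_endo hrho phi_endo (hfi phi phi_endo)).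
  move=> psi psi_endo psiE.
  have [S [SCA SE]] := descent_exists hrho phi_endo psi_endo psiE phiCA.
  exists S; split=> [|S' [_ S'E]]; first by [].
  exact: (descent_unique hrho SE S'E).
- by move=> T1 T2 S1 S2 _ _; apply: is_hat_comp.
- exact: is_hat_id.
Qed.
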